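(* Let $d \ge 1$ and let $\beta = (\beta_1,\ldots,\beta_{d+1})$ be an optimal solution of the problem of minimizing $\beta_1\cdots\beta_d$ over all $(\beta_1,\dots,\beta_{d+1}) \in \mathbb{R}^{d+1}$ satisfying $\beta_1 \ge \cdots \ge \beta_{d+1} \ge 0$, $\beta_1+\cdots+\beta_{d+1}=1$, and, for every $t \in \{1,\dots,d\}$, $\prod_{i=1}^t (\beta_i - \beta_{d+1}) \le \sum_{j=t+1}^{d+1} (\beta_j - \beta_{d+1}) + (d+1)\beta_{d+1}$. Then there exists $\ell \in \{1,\dots,d\}$ such that (a) $\beta_1 \cdots \beta_d = f_\ell(\beta_{d+1})$, and (b) $\frac{1}{(d+1)(s_{\ell+1}-1)} \le \beta_{d+1} \le \frac{1}{(d+1)(s_\ell-1)}$.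
   Context: The Sylvester sequence is defined by $s_1 := 2$ and $s_i := 1 + s_1 s_2 \cdots s_{i-1}$ for $i \ge 2$. For $\ell \in \{1,\dots,d\}$ and $\alpha\in\mathbb{R}$, $f_\ell(\alpha) := \Bigl(\prod_{i=1}^{\ell-1}\bigl(\tfrac{1}{s_i}+\alpha\bigr)\Bigr)\bigl(\tfrac{1}{s_\ell-1} - d\alpha\bigr)\alpha^{d-\ell}$ (the empty product being $1$). *)

From mathcomp Require Import all_boot all_order all_algebra.
From mathcomp Require Import reals.
Set Implicit Arguments. Unset Strict Implicit. Unset Printing Implicit Defensive.
Import Order.TTheory GRing.Theory Num.Theory.

(* sylv_prod n = s_1 * ... * s_n  (empty product = 1). *)
Fixpoint sylv_prod (n : nat) : nat :=
  match n with
  | 0 => 1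
  | n'.+1 => sylv_prod n' * (sylv_prod n').+1
  end.

(* Sylvester sequence, indexed from 1: s_i = 1 + s_1 ... s_{i-1}; s_1 = 2. *)
Definition sylv (i : nat) : nat := (sylv_prod i.-1).+1.

Lemma sylv_prodE n : sylv_prod n = \prod_(1 <= j < n.+1) sylv j.
Proof.
elim: n => [|n IH]; first by rewrite big_geq.
rewrite big_nat_recr //= -IH; reflexivity.
Qed.

Lemma sylv1 : sylv 1 = 2. Proof. by []. Qed.
Lemma sylv_rec i : 2 <= i -> sylv i = 1 + \prod_(1 <= j < i) sylv j.
Proof. by case: i => [|[|i]] // _; rewrite -sylv_prodE add1n. Qed.

Local Open Scope ring_scope.

(* Vectors beta = (beta_1, ..., beta_{d+1}) are functions nat -> R;
   only the indices 1..d+1 are used. *)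
Definition feasible (R : realType) (d : nat) (b : nat -> R) : Prop :=
  (forall i : nat, (1 <= i <= d)%N -> b i.+1 <= b i) /\
  0 <= b d.+1 /\
  \sum_(1 <= i < d.+2) b i = 1 /\
  (forall t : nat, (1 <= t <= d)%N ->
     \prod_(1 <= i < t.+1) (b i - b d.+1)
       <= \sum_(t.+1 <= j < d.+2) (b j - b d.+1) + (d.+1)%:R * b d.+1).

Definition objective (R : realType) (d : nat) (b : nat -> R) : R :=
  \prod_(1 <= i < d.+1) b i.

Definition optimal (R : realType) (d : nat) (b : nat -> R) : Prop :=
  feasible d b /\ forall g : nat -> R, feasible d g -> objective d b <= objective d g.

Definition f_ell (R : realType) (d l : nat) (a : R) : R :=
  (\prod_(1 <= i < l) (1 / (sylv i)%:R + a)) *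
  (1 / ((sylv l)%:R - 1) - d%:R * a) * a ^+ (d - l).

(* Write y_i = beta_(i+1) - beta_(d+1) and z = (d+1) beta_(d+1).  The constraints
   say that y is nonincreasing and nonnegative, sums to 1 - z, and satisfies
   y_0 ... y_(t-1) <= 1 - (y_0 + ... + y_(t-1)).  Replacing a nonincreasing
   positive vector by one that majorizes it can only decrease its product;
   comparing y with (1/s_1, ..., 1/s_t, r) this gives, by induction on k,
   y_0 + ... + y_(k-1) <= 1 - 1/(s_1 ... s_k).  Hence z >= 1/(s_1 ... s_d), so
   1/(s_1 ... s_l) <= z <= 1/(s_1 ... s_(l-1)) = 1/(s_l - 1) for some l <= d.
   The vector (1/s_1, ..., 1/s_(l-1), 1/(s_l - 1) - z, 0, ..., 0) then
   majorizes y, so its objective f_l(beta_(d+1)) is at most beta_1 ... beta_d;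
   as it is itself feasible, optimality gives equality. *)

From mathcomp Require Import all_boot all_order all_algebra.
From mathcomp Require Import reals.
From mathcomp Require Import ring lra zify.
Set Implicit Arguments. Unset Strict Implicit. Unset Printing Implicit Defensive.
Import Order.TTheory GRing.Theory Num.Theory.
Local Open Scope ring_scope.

Section Majorization.
Variable R : realFieldType.

Lemma prod_le1_AGM n (E : nat -> R) :
  (forall i, (i < n)%N -> 0 <= E i) -> \sum_(0 <= i < n) E i <= n%:R ->
  \prod_(0 <= i < n) E i <= 1.
Proof.
move=> E_ge0 sumE.
have /Order.le_of_leif := @leif_AGM R _ predT (fun i : 'I_n => E i)
  (fun i _ => E_ge0 i (ltn_ord i)).
rewrite cardT size_enum_ord -!(big_mkord predT) => /le_trans; apply.
apply: exprn_ile1.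
  by apply: divr_ge0 => //; rewrite big_nat; apply: sumr_ge0 => i /E_ge0.
case: n E_ge0 sumE => [|n] _ sumE; first by rewrite big_geq // mul0r.
by rewrite ler_pdivrMr ?mul1r.
Qed.

Lemma abel_sum_ge n (c e : nat -> R) (K : R) :
  (forall i j, (i <= j < n)%N -> c i <= c j) ->
  (forall i, (i < n)%N -> c i <= K) ->
  (forall k, (k <= n)%N -> \sum_(0 <= i < k) e i <= 0) ->
  K * \sum_(0 <= i < n) e i <= \sum_(0 <= i < n) c i * e i.
Proof.
elim: n K => [|n IH] K c_incr c_le e_pre; first by rewrite !big_geq // mulr0.
have IHn : c n * \sum_(0 <= i < n) e i <= \sum_(0 <= i < n) c i * e i.
  apply: IH => [i j ijn|i ilt|k kn]; [apply: c_incr|apply: c_incr|apply: e_pre];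
  lia.
have := e_pre n.+1 (leqnn _); have := c_le n (ltnSn n).
rewrite !big_nat_recr //=; nra.
Qed.

Lemma prod_majorization_le n (x y : nat -> R) :
  (forall i j, (i <= j < n)%N -> y j <= y i) ->
  (forall i, (i < n)%N -> 0 < y i) ->
  (forall i, (i < n)%N -> 0 <= x i) ->
  (forall k, (k <= n)%N -> \sum_(0 <= i < k) y i <= \sum_(0 <= i < k) x i) ->
  \sum_(0 <= i < n) y i = \sum_(0 <= i < n) x i ->
  \prod_(0 <= i < n) x i <= \prod_(0 <= i < n) y i.
Proof.
move=> y_noninc y_gt0 x_ge0 pre tot.
have abel : 0 <= \sum_(0 <= i < n) (y i)^-1 * (y i - x i).
  have := @abel_sum_ge n (fun i => (y i)^-1) (fun i => y i - x i) (y n.-1)^-1.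
  rewrite big_split /= sumrN tot subrr mulr0; apply.
  - move=> i j ijn; rewrite lef_pV2 ?posrE ?y_gt0 ?y_noninc //; lia.
  - move=> i ilt; rewrite lef_pV2 ?posrE ?y_gt0 ?y_noninc //; lia.
  - by move=> k kn; rewrite big_split /= sumrN subr_le0 pre.
have ratio_sum : \sum_(0 <= i < n) (x i / y i) <= n%:R.
  rewrite big_nat (eq_bigr (fun i => 1 - (y i)^-1 * (y i - x i))); last first.
    move=> i /andP[_ /y_gt0 yi]; field; exact: lt0r_neq0.
  by rewrite -big_nat big_split sumrN /= sumr_const_nat subn0 gerBl.
have := @prod_le1_AGM n _ _ ratio_sum; rewrite prodf_div ler_pdivrMr ?mul1r.
- apply=> i ilt; exact: divr_ge0 (x_ge0 i ilt) (ltW (y_gt0 i ilt)).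
- by rewrite big_nat; apply: prodr_gt0 => i /andP[_ /y_gt0].
Qed.

End Majorization.

Section SylvesterRemainder.
Variable R : realFieldType.

Definition sylv_rem t : R := ((sylv_prod t)%:R)^-1.

Lemma sylv_prod_gt0 t : (0 < sylv_prod t)%N.
Proof. by elim: t => //= t IH; rewrite muln_gt0 IH. Qed.

Lemma sylv_rem_gt0 t : 0 < sylv_rem t.
Proof. by rewrite invr_gt0 ltr0n sylv_prod_gt0. Qed.

Lemma sylv_rem0 : sylv_rem 0 = 1.
Proof. exact: invr1. Qed.

Lemma sylv_remS t : sylv_rem t.+1 * (1 + sylv_rem t) = sylv_rem t ^+ 2.
Proof.
rewrite /sylv_rem /= natrM -addn1 natrD.
have := sylv_prod_gt0 t; rewrite -(ltr0n R) => ?; field; lra.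
Qed.

Lemma sylv_rem_sylv t : ((sylv t.+1)%:R - 1)^-1 = sylv_rem t.
Proof. by rewrite /sylv /= -addn1 natrD addrK. Qed.

Lemma inv_sylv t : ((sylv t.+1)%:R)^-1 = sylv_rem t - sylv_rem t.+1 :> R.
Proof.
rewrite /sylv_rem /sylv /= natrM -addn1 natrD.
have := sylv_prod_gt0 t; rewrite -(ltr0n R) => ?; field; lra.
Qed.

Lemma sylv_remS_le t : sylv_rem t.+1 <= sylv_rem t.
Proof. by rewrite -subr_ge0 -inv_sylv invr_ge0 ler0n. Qed.

Lemma inv_sylvS_le t : ((sylv t.+2)%:R)^-1 <= ((sylv t.+1)%:R)^-1 :> R.
Proof.
rewrite lef_pV2 ?posrE ?ltr0n // ler_nat /sylv /=.
have := sylv_prod_gt0 t; nia.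
Qed.

Lemma sum_inv_sylv k : \sum_(0 <= i < k) ((sylv i.+1)%:R)^-1 = 1 - sylv_rem k.
Proof.
elim: k => [|k IH]; first by rewrite big_geq // sylv_rem0 subrr.
by rewrite big_nat_recr //= IH inv_sylv; ring.
Qed.

Lemma prod_inv_sylv k : \prod_(0 <= i < k) ((sylv i.+1)%:R)^-1 = sylv_rem k.
Proof.
elim: k => [|k IH]; first by rewrite big_geq // sylv_rem0.
by rewrite big_nat_recr //= IH /sylv_rem /sylv /= natrM invfM.
Qed.

Lemma sylv_rem_mul_le t r :
  (sylv_rem t * r <= sylv_rem t - r) = (r <= ((sylv t.+1)%:R)^-1).
Proof.
rewrite inv_sylv; have := sylv_remS t; have := sylv_rem_gt0 t.
move=> ? ?; apply/idP/idP => ?; nra.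
Qed.

Lemma sylv_rem_bracket n (z : R) : sylv_rem n.+1 <= z -> z <= 1 ->
  exists2 m, (m <= n)%N & sylv_rem m.+1 <= z <= sylv_rem m.
Proof.
elim: n => [|n IH] zn z1; first by exists 0%N => //; rewrite sylv_rem0 zn.
have [zn1|zn1] := leP (sylv_rem n.+1) z.
  by have [m mn zm] := IH zn1 z1; exists m => //; exact: leqW.
by exists n.+1 => //; rewrite zn (ltW zn1).
Qed.

End SylvesterRemainder.

Section GapVector.
Variable R : realFieldType.

(* The constraints of the problem on the gaps y_i = beta_(i+1) - beta_(d+1),
   once the right-hand side is rewritten using the sum constraint. *)
Definition admissible n (y : nat -> R) : Prop :=
  [/\ forall i j, (i <= j < n)%N -> y j <= y i,
      forall i, (i < n)%N -> 0 <= y i &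
      forall t, (t <= n)%N ->
        \prod_(0 <= i < t) y i <= 1 - \sum_(0 <= i < t) y i].

Definition sylv_vec m (r : R) i : R :=
  if (i < m)%N then ((sylv i.+1)%:R)^-1 else if i == m then r else 0.

Lemma sum_sylv_vec_prefix m r k : (k <= m)%N ->
  \sum_(0 <= i < k) sylv_vec m r i = 1 - sylv_rem R k.
Proof.
move=> km; rewrite -sum_inv_sylv; apply: eq_big_nat => i /andP[_ ik].
by rewrite /sylv_vec ifT //; lia.
Qed.

Lemma prod_sylv_vec_prefix m r k : (k <= m)%N ->
  \prod_(0 <= i < k) sylv_vec m r i = sylv_rem R k.
Proof.
move=> km; rewrite -prod_inv_sylv; apply: eq_big_nat => i /andP[_ ik].
by rewrite /sylv_vec ifT //; lia.
Qed.

Lemma sum_sylv_vec m r k : (m < k)%N ->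
  \sum_(0 <= i < k) sylv_vec m r i = 1 - sylv_rem R m + r.
Proof.
move=> mk; rewrite (big_cat_nat (n := m)) ?sum_sylv_vec_prefix //=;
  last exact: ltnW.
rewrite big_ltn // {1}/sylv_vec ltnn eqxx big_nat big1 ?addr0 //.
by move=> i /andP[mi _]; rewrite /sylv_vec ltnNge ltnW // gtn_eqF.
Qed.

Lemma prod_sylv_vec (F : R -> R) m r n : (m < n)%N ->
  \prod_(0 <= i < n) F (sylv_vec m r i) =
  \prod_(0 <= i < m) F ((sylv i.+1)%:R)^-1 * F r * F 0 ^+ (n - m.+1).
Proof.
move=> mn; rewrite (big_cat_nat (n := m)) //=; last exact: ltnW.
rewrite (big_ltn mn) {2}/sylv_vec ltnn eqxx mulrA; congr (_ * _ * _).
  by apply: eq_big_nat => i /andP[_ im]; rewrite /sylv_vec im.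
rewrite -prodr_const_nat; apply: eq_big_nat => i /andP[mi _].
by rewrite /sylv_vec ltnNge ltnW // gtn_eqF.
Qed.

Lemma sylv_vec_ge0 m r i : 0 <= r -> 0 <= sylv_vec m r i.
Proof. by rewrite /sylv_vec; case: ifP => _; [rewrite invr_ge0 | case: ifP]. Qed.

Lemma sylv_vec_admissible n m r : (m < n)%N -> 0 <= r ->
  r <= ((sylv m.+1)%:R)^-1 -> admissible n (sylv_vec m r).
Proof.
move=> mn r_ge0 r_le.
have vec_ge0 i := @sylv_vec_ge0 m r i r_ge0.
have vec_noninc : {homo sylv_vec m r : i j / (i <= j)%N >-> j <= i}.
  apply: homo_leq => [x|y x z yx zy|i]; [exact: lexx|exact: le_trans zy yx|].
  rewrite /sylv_vec; case: ifP => [i1m|_]; first by rewrite ltnW // inv_sylvS_le.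
  case: ifP => [/eqP i1m|_]; last exact: vec_ge0 i.
  by subst m; rewrite ltnSn (le_trans r_le) ?inv_sylvS_le.
split=> [i j /andP[ij _]|i _|t tn]; [exact: vec_noninc|exact: vec_ge0|].
have [tm|mt] := leqP t m.
  by rewrite sum_sylv_vec_prefix // prod_sylv_vec_prefix // subKr.
rewrite sum_sylv_vec // (prod_sylv_vec id) // prod_inv_sylv /=.
rewrite (_ : 1 - _ = sylv_rem R m - r); last by ring.
apply: (@le_trans _ _ (sylv_rem R m * r)); last by rewrite sylv_rem_mul_le.
by rewrite ler_piMr ?mulr_ge0 ?(ltW (sylv_rem_gt0 _ _)) // expr0n; case: eqP.
Qed.

Lemma ler_prod_sylv_vec n m r a (y : nat -> R) :
  (m < n)%N -> 0 <= r -> 0 <= a ->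
  (forall i j, (i <= j < n)%N -> y j <= y i) ->
  (forall i, (i < n)%N -> 0 <= y i) ->
  (forall i, (i < n)%N -> 0 < y i + a) ->
  (forall k, (k <= m)%N -> \sum_(0 <= i < k) y i <= 1 - sylv_rem R k) ->
  \sum_(0 <= i < n) y i = 1 - sylv_rem R m + r ->
  \prod_(0 <= i < n) (sylv_vec m r i + a) <= \prod_(0 <= i < n) (y i + a).
Proof.
move=> mn r_ge0 a_ge0 y_noninc y_ge0 ya_gt0 y_prefix y_sum.
have sum_shift (x : nat -> R) k :
    \sum_(0 <= i < k) (x i + a) = \sum_(0 <= i < k) x i + k%:R * a.
  by rewrite big_split /= sumr_const_nat subn0 mulr_natl.
have sum_le_total k :
    (k <= n)%N -> \sum_(0 <= i < k) y i <= \sum_(0 <= i < n) y i.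
  move=> kn; rewrite [X in _ <= X](big_cat_nat (n := k)) //= lerDl big_nat.
  by apply: sumr_ge0 => i /andP[_ /y_ge0].
apply: prod_majorization_le => [i j ijn|//|i _|k kn|].
- by rewrite lerD2r y_noninc.
- by rewrite addr_ge0 ?sylv_vec_ge0.
- rewrite !sum_shift lerD2r; have [km|mk] := leqP k m.
    by rewrite sum_sylv_vec_prefix // y_prefix.
  by rewrite sum_sylv_vec // -y_sum sum_le_total.
- by rewrite !sum_shift sum_sylv_vec // y_sum.
Qed.

Lemma sum_le_sylv_rem n (y : nat -> R) : admissible n y ->
  forall k, (k <= n)%N -> \sum_(0 <= i < k) y i <= 1 - sylv_rem R k.
Proof.
case=> y_noninc y_ge0 y_prod; elim/ltn_ind => -[_ _|t IH tn].
  by rewrite big_geq // sylv_rem0 subrr.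
have IHt k : (k <= t)%N -> \sum_(0 <= i < k) y i <= 1 - sylv_rem R k.
  by move=> kt; apply: IH; lia.
set r := \sum_(0 <= i < t.+1) y i - (1 - sylv_rem R t).
have [r_le0|r_gt0] := leP r 0.
  by have := sylv_remS_le R t; rewrite /r in r_le0; lra.
have yt_gt0 : 0 < y t.
  by move: r_gt0; rewrite /r big_nat_recr //=; have := IHt t (leqnn t); lra.
(* (1/s_1, ..., 1/s_t, r) majorizes (y_0, ..., y_t): smaller product. *)
have prod_ge : sylv_rem R t * r <= \prod_(0 <= i < t.+1) y i.
  suff: \prod_(0 <= i < t.+1) (sylv_vec t r i + 0)
        <= \prod_(0 <= i < t.+1) (y i + 0).
    rewrite (prod_sylv_vec (fun x => x + 0)) // subnn expr0 mulr1 addr0.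
    under eq_bigr do rewrite addr0.
    by under [X in _ <= X]eq_bigr do rewrite addr0; rewrite prod_inv_sylv.
  apply: ler_prod_sylv_vec (ltnSn t) (ltW r_gt0) (lexx 0) _ _ _ IHt _.
  - by move=> i j /andP[ij jt]; apply: y_noninc; lia.
  - by move=> i it; apply: y_ge0; lia.
  - move=> i it; rewrite addr0 (lt_le_trans yt_gt0) ?y_noninc //; lia.
  - by rewrite /r; ring.
have : r <= ((sylv t.+1)%:R)^-1.
  rewrite -sylv_rem_mul_le; apply: le_trans prod_ge (le_trans (y_prod t.+1 tn) _).
  by rewrite /r; lra.
by rewrite inv_sylv /r; lra.
Qed.

End GapVector.

Section Feasibility.
Variable R : realType.
Implicit Types (b y : nat -> R) (a : R).

Definition gaps d b i : R := b i.+1 - b d.+1.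

Definition of_gaps d a y i : R := if (i <= d)%N then y i.-1 + a else a.

Lemma sum_gaps d b :
  \sum_(1 <= i < d.+2) b i = \sum_(0 <= i < d) gaps d b i + d.+1%:R * b d.+1.
Proof.
rewrite big_nat_recr //= big_add1 /= /gaps big_split /= sumrN sumr_const_nat.
by rewrite subn0 -mulr_natl -[d.+1]addn1 natrD; ring.
Qed.

Lemma sum_gaps_from d b t : (t <= d)%N ->
  \sum_(t.+1 <= j < d.+2) (b j - b d.+1) = \sum_(t <= i < d) gaps d b i.
Proof. by move=> td; rewrite big_add1 /= big_nat_recr //= subrr addr0. Qed.

Lemma feasibleP d b : feasible d b <->
  [/\ admissible d (gaps d b),
      \sum_(0 <= i < d) gaps d b i = 1 - d.+1%:R * b d.+1 & 0 <= b d.+1].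
Proof.
have prodE t :
    \prod_(1 <= i < t.+1) (b i - b d.+1) = \prod_(0 <= i < t) gaps d b i.
  by rewrite big_add1.
have rhsE t : (t <= d)%N -> \sum_(0 <= i < d) gaps d b i = 1 - d.+1%:R * b d.+1 ->
    \sum_(t.+1 <= j < d.+2) (b j - b d.+1) + d.+1%:R * b d.+1
    = 1 - \sum_(0 <= i < t) gaps d b i.
  move=> td; rewrite sum_gaps_from // (big_cat_nat (n := t)) //=; lra.
split=> [[b_noninc [b_ge0 [b_sum b_prod]]]|[[y_noninc y_ge0 y_prod] y_sum b_ge0]].
  have b_mono : {in [pred i | 0 < i <= d.+1]%N &,
      {homo b : i j / (i <= j)%N >-> j <= i}}.
    apply: homo_leq_in => [x|y x z yx zy|i j|i].
    - exact: lexx.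
    - exact: le_trans zy yx.
    - by rewrite !inE => /andP[i0 _] /andP[_ jd] k /andP[ik kj]; rewrite inE; lia.
    - by rewrite !inE => /andP[i0 _] /andP[_ id]; apply: b_noninc; lia.
  have y_sum : \sum_(0 <= i < d) gaps d b i = 1 - d.+1%:R * b d.+1.
    by move: b_sum; rewrite sum_gaps; lra.
  split=> //; split=> [i j /andP[ij jd]|i id|t td].
  - by rewrite /gaps lerD2r b_mono ?inE //; lia.
  - by rewrite /gaps subr_ge0 b_mono ?inE //; lia.
  - case: t td => [|t] td; first by rewrite !big_geq // subr0.
    by rewrite -prodE -rhsE ?b_prod.
split; [move=> i /andP[i0 id] | split; [by [] | split]].
- have [id'|di] := ltnP i d.
  + by have := y_noninc i.-1 i; rewrite /gaps lerD2r prednK //; apply; lia.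
  + have -> : i = d by lia.
    by have := y_ge0 d.-1; rewrite /gaps prednK ?subr_ge0; [apply | lia].
- by rewrite sum_gaps y_sum; lra.
- by move=> t /andP[t0 td]; rewrite prodE rhsE ?y_prod.
Qed.

Lemma objective_gaps d b :
  objective d b = \prod_(0 <= i < d) (gaps d b i + b d.+1).
Proof. by rewrite /objective big_add1; apply: eq_bigr => i _; rewrite subrK. Qed.

Lemma of_gaps_top d a y : of_gaps d a y d.+1 = a.
Proof. by rewrite /of_gaps ltnn. Qed.

Lemma gaps_of_gaps d a y i : (i < d)%N -> gaps d (of_gaps d a y) i = y i.
Proof. by move=> id; rewrite /gaps of_gaps_top /of_gaps id addrK. Qed.

Lemma feasible_of_gaps d a y : 0 <= a -> admissible d y ->
  \sum_(0 <= i < d) y i = 1 - d.+1%:R * a -> feasible d (of_gaps d a y).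
Proof.
move=> a_ge0 [y_noninc y_ge0 y_prod] y_sum.
have gE i : (i < d)%N -> gaps d (of_gaps d a y) i = y i := @gaps_of_gaps d a y i.
have sumE t : (t <= d)%N ->
    \sum_(0 <= i < t) gaps d (of_gaps d a y) i = \sum_(0 <= i < t) y i.
  by move=> td; apply: eq_big_nat => i /andP[_ it]; apply: gE; lia.
have prodE t : (t <= d)%N ->
    \prod_(0 <= i < t) gaps d (of_gaps d a y) i = \prod_(0 <= i < t) y i.
  by move=> td; apply: eq_big_nat => i /andP[_ it]; apply: gE; lia.
apply/feasibleP; rewrite of_gaps_top sumE //; split=> //.
split=> [i j /andP[ij jd]|i id|t td]; last by rewrite sumE ?prodE ?y_prod.
- by rewrite !gE ?y_noninc ?ij //; lia.
- by rewrite gE ?y_ge0.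
Qed.

Lemma objective_of_gaps d a y :
  objective d (of_gaps d a y) = \prod_(0 <= i < d) (y i + a).
Proof.
rewrite objective_gaps of_gaps_top.
by apply: eq_big_nat => i /andP[_ id]; rewrite gaps_of_gaps.
Qed.

Lemma f_ell_sylv_vec d m a : (m < d)%N ->
  f_ell d m.+1 a =
  \prod_(0 <= i < d) (sylv_vec m (sylv_rem R m - d.+1%:R * a) i + a).
Proof.
move=> md; rewrite (prod_sylv_vec (fun x => x + a)) // add0r /f_ell big_add1 /=.
rewrite div1r sylv_rem_sylv; congr (_ * _ * _).
  by apply: eq_bigr => i _; rewrite div1r.
by rewrite -[d.+1]addn1 natrD; ring.
Qed.

End Feasibility.

Theorem lemma3p2 (R : realType) (d : nat) (b : nat -> R) :
  (1 <= d)%N -> optimal d b ->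
  exists l : nat, (1 <= l <= d)%N /\ objective d b = f_ell d l (b d.+1) /\
    1 / ((d.+1)%:R * ((sylv l.+1)%:R - 1)) <= b d.+1 /\
    b d.+1 <= 1 / ((d.+1)%:R * ((sylv l)%:R - 1)).
Proof.
move=> d_gt0 [/feasibleP[adm gaps_sum a_ge0] b_opt].
have [y_noninc y_ge0 _] := adm.
set a := b d.+1 in gaps_sum a_ge0 *; set z := d.+1%:R * a in gaps_sum.
have z_ge : sylv_rem R d <= z.
  by have := sum_le_sylv_rem adm (leqnn d); rewrite gaps_sum; lra.
have z_le1 : z <= 1.
  by rewrite -subr_ge0 -gaps_sum big_nat; apply: sumr_ge0 => i /andP[_ /y_ge0].
have a_gt0 : 0 < a.
  by rewrite -(pmulr_rgt0 _ (ltr0Sn _ d)) (lt_le_trans (sylv_rem_gt0 R d)).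
have [m m_le /andP[zm1 zm]] :
    exists2 m, (m <= d.-1)%N & sylv_rem R m.+1 <= z <= sylv_rem R m.
  by apply: sylv_rem_bracket; rewrite ?prednK.
have md : (m < d)%N by lia.
exists m.+1; split; first by lia.
split; last first.
  by rewrite !div1r !invfM !sylv_rem_sylv ler_pdivrMl ?ler_pdivlMl ?ltr0Sn.
rewrite f_ell_sylv_vec // -/z; set r := sylv_rem R m - z.
apply/eqP; rewrite eq_le; apply/andP; split.
- rewrite -objective_of_gaps; apply: b_opt; apply: feasible_of_gaps => //.
    by apply: sylv_vec_admissible; rewrite // ?inv_sylv /r; lra.
  by rewrite sum_sylv_vec // /r /z; ring.
- rewrite objective_gaps; apply: ler_prod_sylv_vec => //.
  + by rewrite /r; lra.
  + by move=> i /y_ge0; lra.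
  + by move=> k km; apply: (sum_le_sylv_rem adm); lia.
  + by rewrite gaps_sum /r; ring.
Qed.
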